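(* Let $G$ be an arbitrary group and let $S=\bigoplus_{g\in G}S_g$ be an epsilon-strongly $G$-graded ring with principal component $R=S_e$. If $\mathrm{Supp}(S)$ is finite and $R$ is left (respectively right) artinian, then $S$ is left (respectively right) artinian.
   Context: All rings are associative with multiplicative identity $1\neq 0$. A ring $S$ is $G$-graded if $S=\bigoplus_{g\in G}S_g$ for additive subgroups $S_g$ with $S_gS_h\subseteq S_{gh}$ for all $g,h\in G$; $S_e$ is the principal component, and $\mathrm{Supp}(S)=\{g\in G:S_g\neq\{0\}\}$. $S$ is epsilon-strongly $G$-graded if (a) $S_gS_{g^{-1}}S_g=S_g$ for all $g\in G$, and (b) for each $g\in G$ the ideal $S_gS_{g^{-1}}$ of $S_e$ has a multiplicative identity. *)

From mathcomp Require Import all_boot all_algebra.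
From Stdlib Require List.
Set Implicit Arguments. Unset Strict Implicit. Unset Printing Implicit Defensive.
Import GRing.Theory.
Local Open Scope ring_scope.

Record is_group (G : Type) (mul : G -> G -> G) (e : G) (inv : G -> G) : Prop := {
  grp_assoc : forall a b c, mul a (mul b c) = mul (mul a b) c;
  grp_unitl : forall a, mul e a = a;
  grp_unitr : forall a, mul a e = a;
  grp_invl  : forall a, mul (inv a) a = e;
  grp_invr  : forall a, mul a (inv a) = e }.

Section Graded.
Variables (G : Type) (S : nzRingType).

Record is_graded (mul : G -> G -> G) (Sg : G -> S -> Prop) : Prop := {
  gr_zero : forall g, Sg g 0;
  gr_sub  : forall g x y, Sg g x -> Sg g y -> Sg g (x - y);
  gr_mul  : forall g h x y, Sg g x -> Sg h y -> Sg (mul g h) (x * y);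
  gr_span : forall s : S, exists l : seq (G * S),
      List.NoDup (map fst l) /\ (forall p, List.In p l -> Sg p.1 p.2) /\
      s = \sum_(p <- l) p.2;
  gr_indep : forall l : seq (G * S),
      List.NoDup (map fst l) -> (forall p, List.In p l -> Sg p.1 p.2) ->
      \sum_(p <- l) p.2 = 0 -> forall p, List.In p l -> p.2 = 0 }.

Definition prod2 (A B : S -> Prop) (s : S) : Prop :=
  exists l : seq (S * S), (forall p, List.In p l -> A p.1 /\ B p.2) /\
    s = \sum_(p <- l) p.1 * p.2.

Definition prod3 (A B C : S -> Prop) (s : S) : Prop :=
  exists l : seq (S * S * S),
    (forall p, List.In p l -> [/\ A p.1.1, B p.1.2 & C p.2]) /\
    s = \sum_(p <- l) p.1.1 * p.1.2 * p.2.

Definition epsilon_strongly_graded (mul : G -> G -> G) (inv : G -> G)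
    (Sg : G -> S -> Prop) : Prop :=
  is_graded mul Sg /\
  (forall g s, prod3 (Sg g) (Sg (inv g)) (Sg g) s <-> Sg g s) /\
  (forall g, exists eps, prod2 (Sg g) (Sg (inv g)) eps /\
     forall x, prod2 (Sg g) (Sg (inv g)) x -> eps * x = x /\ x * eps = x).

Definition finite_support (Sg : G -> S -> Prop) : Prop :=
  exists l : list G, forall g, (exists x, Sg g x /\ x <> 0) -> List.In g l.

End Graded.

Section Artinian.
Variable S : nzRingType.

Definition left_ideal_in (A J : S -> Prop) : Prop :=
  (forall x, J x -> A x) /\ J 0 /\ (forall x y, J x -> J y -> J (x - y)) /\
  (forall r x, A r -> J x -> J (r * x)).

Definition right_ideal_in (A J : S -> Prop) : Prop :=
  (forall x, J x -> A x) /\ J 0 /\ (forall x y, J x -> J y -> J (x - y)) /\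
  (forall r x, A r -> J x -> J (x * r)).

Definition left_artinian_in (A : S -> Prop) : Prop :=
  forall I : nat -> S -> Prop, (forall n, left_ideal_in A (I n)) ->
    (forall n x, I n.+1 x -> I n x) ->
    exists N, forall n, (N <= n)%N -> forall x, I n x <-> I N x.

Definition right_artinian_in (A : S -> Prop) : Prop :=
  forall I : nat -> S -> Prop, (forall n, right_ideal_in A (I n)) ->
    (forall n x, I n.+1 x -> I n x) ->
    exists N, forall n, (N <= n)%N -> forall x, I n x <-> I N x.

Definition left_artinian : Prop := left_artinian_in (fun _ => True).
Definition right_artinian : Prop := right_artinian_in (fun _ => True).
End Artinian.

From mathcomp Require Import all_boot all_algebra.
From Stdlib Require List.
Set Implicit Arguments. Unset Strict Implicit. Unset Printing Implicit Defensive.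
Import GRing.Theory.
Local Open Scope ring_scope.

(* The grading makes S a finitely generated left module over
   R = S_e: if eps = sum_i a_i b_i is the unit of S_g^-1 S_g, with a_i in S_g^-1
   and b_i in S_g, then every x in S_g satisfies x = x eps = sum_i (x a_i) b_i
   with x a_i in S_e, and only finitely many S_g are nonzero.  A finitely
   generated module over a left artinian ring is artinian (induction on the
   number of generators), and left ideals of S are R-submodules.  The right
   case is the left case for the opposite ring. *)

Lemma group_invK (G : Type) (mul : G -> G -> G) (e : G) (inv : G -> G) :
  is_group mul e inv -> involutive inv.
Proof.
move=> grp g; rewrite -[inv (inv g)](grp_unitr grp) -(grp_invl grp g).
by rewrite (grp_assoc grp) (grp_invl grp) (grp_unitl grp).
Qed.

Lemma eq_big_In (R : nzRingType) (I : Type) (r : seq I) (F1 F2 : I -> R) :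
  (forall i, List.In i r -> F1 i = F2 i) ->
  \sum_(i <- r) F1 i = \sum_(i <- r) F2 i.
Proof.
elim: r => [|i r IHr] eqF; first by rewrite !big_nil.
rewrite !big_cons eqF ?IHr //; last by left.
by move=> j rj; apply: eqF; right.
Qed.

Section Chains.
Variable X : Type.
Implicit Type C : nat -> X -> Prop.

Definition descending C := forall n x, C n.+1 x -> C n x.

Definition chain_stable_at C (N : nat) :=
  forall n, (N <= n)%N -> forall x, C n x <-> C N x.

Lemma descending_le C m n x : descending C -> (m <= n)%N -> C n x -> C m x.
Proof.
move=> desc; elim: n => [|n IHn]; first by rewrite leqn0 => /eqP ->.
by rewrite leq_eqVlt ltnS => /predU1P [-> // | le_mn] /desc; apply: IHn.
Qed.

Lemma chain_stable_at_le C N N' :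
  chain_stable_at C N -> (N <= N')%N -> chain_stable_at C N'.
Proof.
move=> stN le_NN' n le_N'n x.
by rewrite (stN n (leq_trans le_NN' le_N'n)) (stN N').
Qed.

End Chains.

Section Span.
Variables (T : nzRingType) (A : T -> Prop).
Hypothesis A0 : A 0.
Hypothesis Asub : forall x y, A x -> A y -> A (x - y).
Hypothesis Amul : forall x y, A x -> A y -> A (x * y).

Fixpoint span (vs : seq T) (x : T) : Prop :=
  match vs with
  | [::] => x = 0
  | v :: vs' => exists r y, [/\ A r, span vs' y & x = r * v + y]
  end.

Lemma span0 vs : span vs 0.
Proof. by elim: vs => [|v vs IH] //=; exists 0, 0; rewrite mul0r addr0. Qed.

Lemma span_sub vs x y : span vs x -> span vs y -> span vs (x - y).
Proof.
elim: vs x y => [|v vs IH] x y /=; first by move=> -> ->; rewrite subr0.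
move=> [r1 [y1 [A1 S1 ->]]] [r2 [y2 [A2 S2 ->]]].
exists (r1 - r2), (y1 - y2); split; [exact: Asub | exact: IH |].
by rewrite mulrBl opprD addrACA.
Qed.

Lemma span_add vs x y : span vs x -> span vs y -> span vs (x + y).
Proof.
move=> Sx Sy; have := span_sub Sx (span_sub (span0 vs) Sy).
by rewrite sub0r opprK.
Qed.

Lemma span_mul vs a x : A a -> span vs x -> span vs (a * x).
Proof.
elim: vs x => [|v vs IH] x Aa /=; first by move=> ->; rewrite mulr0.
move=> [r [y [Ar Sy ->]]]; exists (a * r), (a * y).
by split; [exact: Amul | exact: IH | rewrite mulrDr mulrA].
Qed.

Lemma span_catl ws vs x : span vs x -> span (ws ++ vs) x.
Proof.
elim: ws => [|w ws IH] //= Sx; exists 0, x.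
by split; [| exact: IH | rewrite mul0r add0r].
Qed.

Lemma span_catr ws vs x : span ws x -> span (ws ++ vs) x.
Proof.
elim: ws x => [|w ws IH] x /=; first by move=> ->; exact: span0.
by move=> [r [y [Ar Sy ->]]]; exists r, y; split => //; exact: IH.
Qed.

Lemma span_sum (I : Type) vs (r : seq I) (F : I -> T) :
  (forall i, List.In i r -> span vs (F i)) -> span vs (\sum_(i <- r) F i).
Proof.
elim: r => [|i r IH] SF; first by rewrite big_nil; exact: span0.
rewrite big_cons; apply: span_add; first by apply: SF; left.
by apply: IH => j rj; apply: SF; right.
Qed.

Lemma span_big (I : Type) (r : seq I) (c v : I -> T) :
  (forall i, List.In i r -> A (c i)) ->
  span [seq v i | i <- r] (\sum_(i <- r) c i * v i).
Proof.
elim: r => [|i r IH] Ac; first by rewrite big_nil.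
rewrite big_cons; exists (c i), (\sum_(j <- r) c j * v j); split => //.
  by apply: Ac; left.
by apply: IH => j rj; apply: Ac; right.
Qed.

Definition finitely_spanned (B : T -> Prop) :=
  exists vs, forall x, B x -> span vs x.

Lemma finitely_spanned_big_union (I : Type) (B : I -> T -> Prop) (l : seq I) :
  (forall i, finitely_spanned (B i)) ->
  exists vs, forall i, List.In i l -> forall x, B i x -> span vs x.
Proof.
move=> spanB; elim: l => [|i l [vs IH]]; first by exists [::].
have [ws Hws] := spanB i; exists (ws ++ vs) => j [<- | lj] x Bx.
  by apply: span_catr; apply: Hws.
by apply: span_catl; apply: IH lj x Bx.
Qed.

Lemma span_of_decomposition (I : Type) (B : I -> T -> Prop) (l : seq I) :
  (forall i, finitely_spanned (B i)) ->
  (forall i x, B i x -> x <> 0 -> List.In i l) ->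
  (forall x, exists r : seq (I * T),
     (forall p, List.In p r -> B p.1 p.2) /\ x = \sum_(p <- r) p.2) ->
  exists vs, forall x, span vs x.
Proof.
move=> spanB suppB decB; have [vs Hvs] := finitely_spanned_big_union l spanB.
exists vs => x; have [r [Br ->]] := decB x; apply: span_sum => p rp.
have [-> | nz] := eqVneq p.2 0; first exact: span0.
by apply: Hvs (Br p rp); apply: suppB (Br p rp) _; apply/eqP.
Qed.

Record submodule (M : T -> Prop) : Prop := Submodule {
  submod0 : M 0;
  submodB : forall x y, M x -> M y -> M (x - y);
  submodZ : forall a x, A a -> M x -> M (a * x) }.

Lemma submodD M x y : submodule M -> M x -> M y -> M (x + y).
Proof.
move=> sM Mx My; have -> : x + y = x - (0 - y) by rewrite sub0r opprK.
by apply: submodB => //; apply: submodB => //; exact: submod0.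
Qed.

Section SpanCons.
Variables (v : T) (vs : seq T).

Definition coef_ideal (M : T -> Prop) (r : T) :=
  A r /\ exists2 y, span vs y & M (r * v + y).

Lemma coef_ideal_left_ideal M : submodule M -> left_ideal_in A (coef_ideal M).
Proof.
move=> sM; split; first by move=> x [].
split.
  by split => //; exists 0; [exact: span0 | rewrite mul0r addr0; case: sM].
split.
  move=> x y [Ax [y1 S1 M1]] [Ay [y2 S2 M2]]; split; first exact: Asub.
  exists (y1 - y2); first exact: span_sub.
  by have := submodB sM M1 M2; rewrite mulrBl opprD addrACA.
move=> a x Aa [Ax [y Sy My]]; split; first exact: Amul.
exists (a * y); first exact: span_mul.
by have := submodZ sM Aa My; rewrite mulrDr mulrA.
Qed.

Lemma submoduleI_span M : submodule M -> submodule (fun x => M x /\ span vs x).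
Proof.
move=> sM; split; first by split; [exact: submod0 | exact: span0].
  by move=> x y [Mx Sx] [My Sy]; split; [exact: submodB | exact: span_sub].
by move=> a x Aa [Mx Sx]; split; [exact: submodZ | exact: span_mul].
Qed.

(* [M n] is an extension of its [v]-coefficient ideal by its trace on
   [span vs], so it stabilises as soon as both of these do. *)
Lemma chain_stable_cons (M : nat -> T -> Prop) N :
  (forall n, submodule (M n)) -> descending M ->
  (forall n x, M n x -> span (v :: vs) x) ->
  chain_stable_at (fun n x => M n x /\ span vs x) N ->
  chain_stable_at (fun n => coef_ideal (M n)) N ->
  chain_stable_at M N.
Proof.
move=> sM desc spanM stI stJ n le_Nn x; split; first exact: descending_le.
move=> MNx; have [r [y [Ar Sy def_x]]] := spanM _ _ MNx.
have [_ [y' Sy' Mny']] : coef_ideal (M n) r.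
  by apply/(stJ n le_Nn); split => //; exists y; rewrite // -def_x.
have MNy' := descending_le desc le_Nn Mny'.
have [Mn_dy _] : M n (y - y') /\ span vs (y - y').
  apply/(stI n le_Nn); split; last exact: span_sub.
  by have := submodB (sM N) MNx MNy'; rewrite def_x opprD addrACA subrr add0r.
have -> : x = (r * v + y') + (y - y').
  by rewrite def_x -addrA [y' + _]addrC addrNK.
exact: submodD.
Qed.

End SpanCons.

Lemma span_submodule_dcc vs : left_artinian_in A ->
  forall M : nat -> T -> Prop, (forall n, submodule (M n)) -> descending M ->
  (forall n x, M n x -> span vs x) -> exists N, chain_stable_at M N.
Proof.
move=> art; elim: vs => [|v vs IH] M sM desc spanM.
  exists 0%N => n _ x; have M0 m : M m 0 by case: (sM m).
  by split => /spanM /= ->.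
have [N1 stI] : exists N, chain_stable_at (fun n x => M n x /\ span vs x) N.
  apply: IH => [n | n x [/desc]| n x []] //; exact: submoduleI_span.
have [N2 stJ] : exists N, chain_stable_at (fun n => coef_ideal v vs (M n)) N.
  apply: art => [n | n x [Ax [y Sy /desc My]]].
    exact: coef_ideal_left_ideal.
  by split => //; exists y.
exists (maxn N1 N2); apply: (chain_stable_cons (v := v) (vs := vs)) => //.
  by apply: chain_stable_at_le stI _; exact: leq_maxl.
by apply: chain_stable_at_le stJ _; exact: leq_maxr.
Qed.

Lemma left_artinian_of_span vs : left_artinian_in A -> (forall x, span vs x) ->
  left_artinian T.
Proof.
move=> art spanT I idI desc; apply: (span_submodule_dcc art) => // n.
by have [_ [I0 [IB IZ]]] := idI n; split => // a x _; apply: IZ.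
Qed.

End Span.

Section EpsilonStronglyGraded.
Variables (G : Type) (mul : G -> G -> G) (e : G) (inv : G -> G).
Variables (S : nzRingType) (Sg : G -> S -> Prop).
Hypothesis grp : is_group mul e inv.
Hypothesis gr : is_graded mul Sg.
Hypothesis Sg_prod3 : forall g s, prod3 (Sg g) (Sg (inv g)) (Sg g) s <-> Sg g s.
Hypothesis Sg_unit : forall g, exists eps, prod2 (Sg g) (Sg (inv g)) eps /\
  forall x, prod2 (Sg g) (Sg (inv g)) x -> eps * x = x /\ x * eps = x.

Lemma prod2_mul (P Q : S -> Prop) a b : P a -> Q b -> prod2 P Q (a * b).
Proof. by exists [:: (a, b)]; split; [move=> p [<- | //] | rewrite big_seq1]. Qed.

Lemma principal_mul x y : Sg e x -> Sg e y -> Sg e (x * y).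
Proof. by rewrite -{3}(grp_unitl grp e); apply: (gr_mul gr). Qed.

Lemma mul_inv_homogeneous g x y : Sg g x -> Sg (inv g) y -> Sg e (x * y).
Proof. by rewrite -(grp_invr grp g); apply: (gr_mul gr). Qed.

Lemma inv_mul_homogeneous g x y : Sg (inv g) x -> Sg g y -> Sg e (x * y).
Proof. by rewrite -(grp_invl grp g); apply: (gr_mul gr). Qed.

(* The unit of S_g S_g^-1 acts trivially on S_g from the left, since
   S_g = S_g S_g^-1 S_g; symmetrically for S_g^-1 S_g on the right. *)
Lemma unit_decomposition_mull g : exists lg : seq (S * S),
  (forall p, List.In p lg -> Sg g p.1 /\ Sg (inv g) p.2) /\
  forall x, Sg g x -> (\sum_(p <- lg) p.1 * p.2) * x = x.
Proof.
have [eps [[lg [Hlg def_eps]] eps_id]] := Sg_unit g.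
exists lg; split => // x /Sg_prod3 [l3 [Hl3 ->]].
rewrite -def_eps big_distrr /=; apply: eq_big_In => p /Hl3 [a b _].
by rewrite mulrA (eps_id _ (prod2_mul a b)).1.
Qed.

Lemma unit_decomposition_mulr g : exists lg : seq (S * S),
  (forall p, List.In p lg -> Sg (inv g) p.1 /\ Sg g p.2) /\
  forall x, Sg g x -> x * \sum_(p <- lg) p.1 * p.2 = x.
Proof.
have [eps [[lg [Hlg def_eps]] eps_id]] := Sg_unit (inv g).
rewrite (group_invK grp) in Hlg eps_id.
exists lg; split => // x /Sg_prod3 [l3 [Hl3 ->]].
rewrite -def_eps big_distrl /=; apply: eq_big_In => p /Hl3 [_ b c].
by rewrite -!mulrA [p.1.2 * (p.2 * _)]mulrA (eps_id _ (prod2_mul b c)).2.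
Qed.

Lemma homogeneous_left_span g : finitely_spanned (Sg e) (Sg g).
Proof.
have [lg [Hlg eps_id]] := unit_decomposition_mulr g.
exists [seq p.2 | p <- lg] => x Sgx; rewrite -(eps_id x Sgx) big_distrr /=.
under eq_bigr do rewrite mulrA.
by apply: span_big => p /Hlg [a _]; apply: mul_inv_homogeneous Sgx a.
Qed.

Lemma homogeneous_right_span g : finitely_spanned (T := S^c) (Sg e) (Sg g).
Proof.
have [lg [Hlg eps_id]] := unit_decomposition_mull g.
exists [seq p.1 | p <- lg] => x Sgx; rewrite -(eps_id x Sgx) big_distrl /=.
under eq_bigr do rewrite -mulrA.
suff Sg_e_coef p : List.In p lg -> Sg e (p.2 * x).
  exact: (@span_big S^c (Sg e) _ lg _ (fun p => p.1) Sg_e_coef).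
by move=> /Hlg [_ b]; apply: inv_mul_homogeneous b Sgx.
Qed.

End EpsilonStronglyGraded.

Theorem proposition3p9 (G : Type) (mul : G -> G -> G) (e : G) (inv : G -> G)
  (S : nzRingType) (Sg : G -> S -> Prop) :
  is_group mul e inv ->
  epsilon_strongly_graded mul inv Sg ->
  finite_support Sg ->
  (left_artinian_in (Sg e) -> left_artinian S) /\
  (right_artinian_in (Sg e) -> right_artinian S).
Proof.
move=> grp [gr [Sg_prod3 Sg_unit]] [l supp].
have supp_nz g x : Sg g x -> x <> 0 -> List.In g l.
  by move=> Sgx nz; apply: supp; exists x.
have Sg_e0 := gr_zero gr e; have Sg_eB := @gr_sub _ _ _ _ gr e.
have Sg_eM := principal_mul grp gr.
have Sg_sum (x : S) : exists r : seq (G * S),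
    (forall p, List.In p r -> Sg p.1 p.2) /\ x = \sum_(p <- r) p.2.
  by have [r [_ decx]] := gr_span gr x; exists r.
split => art.
- have [vs spanS] := span_of_decomposition Sg_e0 Sg_eB
    (homogeneous_left_span grp gr Sg_prod3 Sg_unit) supp_nz Sg_sum.
  exact: (left_artinian_of_span Sg_e0 Sg_eB Sg_eM art spanS).
- have [vs spanS] := span_of_decomposition (T := S^c) Sg_e0 Sg_eB
    (homogeneous_right_span grp gr Sg_prod3 Sg_unit) supp_nz Sg_sum.
  have Sg_eMc (x y : S^c) : Sg e x -> Sg e y -> Sg e (x * y).
    by move=> ex ey; exact: Sg_eM ey ex.
  have artSc : left_artinian S^c :=
    left_artinian_of_span (T := S^c) Sg_e0 Sg_eB Sg_eMc art spanS.
  exact: artSc.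
Qed.
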